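(* Let $g(q),h(q)\in\mathbb Z[q]$. Let $G$ be the functor from $\mathbb Z[q]\otimes\Psi$-Rings to abelian groups sending $R$ to the additive group $R^{\mathbb N}$ (componentwise addition) and a morphism $f$ to $\alpha\mapsto f\circ\alpha$, and for each object $R$ let $(\overline\varphi_{\rm ab})^{g(q)}_R:G(R)\to G(R)$, $(a_n)_{n\in\mathbb N}\mapsto\big(\sum_{d|n}d[\frac nd]_{g(q)}\Psi^{n/d}(a_d)\big)_{n\in\mathbb N}$. Then there exists a natural isomorphism $\omega:G\to G$ such that $(\overline\varphi_{\rm ab})^{g(q)}_R=(\overline\varphi_{\rm ab})^{h(q)}_R\circ\omega_R$ for all $R$ if and only if $1-g(q)=c_1k(q)$ and $1-h(q)=c_2k(q)$ for some $c_1,c_2\in\mathbb Z$ and $k(q)\in\mathbb Z[q]$ such that (1) $c_1$ and $c_2$ have the same set of prime divisors, and (2) $k(q)$ is primitive.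
   Context: A $\Psi$-ring is a commutative unital ring with maps $\Psi^n$ ($n\ge1$) that are unital ring endomorphisms with $\Psi^1=\mathrm{id}$ and $\Psi^n\Psi^m=\Psi^{nm}$. The category $\mathbb Z[q]\otimes\Psi$-Rings has as objects $\mathbb Z[q]$-algebras with a $\Psi$-ring structure satisfying $\Psi^n(q)=q^n$ for all $n$, and as morphisms unity-preserving $\mathbb Z[q]$-algebra homomorphisms commuting with the $\Psi^n$. $[n]_{g(q)}=1+g(q)+\dots+g(q)^{n-1}$. A nonzero polynomial in $\mathbb Z[q]$ is primitive if the only integers dividing all its coefficients are $\pm1$. *)

From HB Require Import structures.
From mathcomp Require Import all_boot all_order all_algebra.
Set Implicit Arguments. Unset Strict Implicit. Unset Printing Implicit Defensive.
Import Order.TTheory GRing.Theory Num.Theory.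
Local Open Scope ring_scope.

(* An object of Z[q] (x) Psi-Rings: a commutative unital ring (the zero ring
   allowed) with a distinguished element [qe] (the image of q, which determines
   the Z[q]-algebra structure since Z[q] is free on q), and operations
   [psi n] for n >= 1 (the value at n = 0 is irrelevant junk). *)
Record psiQRing := PsiQRing {
  carrier :> comPzRingType;
  qe : carrier;
  psi : nat -> carrier -> carrier;
  psiD : forall n, (0 < n)%N -> forall x y, psi n (x + y) = psi n x + psi n y;
  psiM : forall n, (0 < n)%N -> forall x y, psi n (x * y) = psi n x * psi n y;
  psi1 : forall n, (0 < n)%N -> psi n 1 = 1;
  psi_id : forall x, psi 1 x = x;
  psi_comp : forall n m, (0 < n)%N -> (0 < m)%N ->
    forall x, psi n (psi m x) = psi (n * m) x;
  psi_q : forall n, (0 < n)%N -> psi n qe = qe ^+ n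
}.

Definition is_psiQ_morph (R S : psiQRing) (f : R -> S) : Prop :=
  [/\ forall x y, f (x + y) = f x + f y,
      forall x y, f (x * y) = f x * f y,
      f 1 = 1,
      f (@qe R) = @qe S &
      forall n, (0 < n)%N -> forall x, f (@psi R n x) = @psi S n (f x)].

Definition evalq (R : psiQRing) (g : {poly int}) : R :=
  \sum_(i < size g) (g`_i)%:~R * @qe R ^+ i.

Definition qint (R : comPzRingType) (m : nat) (x : R) : R :=
  \sum_(i < m) x ^+ i.

(* G(R) = R^N with N = {1,2,...}; a sequence (a_n)_{n>=1} is represented as
   a : nat -> R with a i = a_{i+1}. *)
Definition Gseq (R : psiQRing) := nat -> R.

Definition phibar (g : {poly int}) (R : psiQRing) (a : Gseq R) : Gseq R :=
  fun i => let n := i.+1 in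
    \sum_(d <- divisors n)
      d%:R * qint (n %/ d) (evalq R g) * @psi R (n %/ d) (a d.-1).

Definition primitive_poly (k : {poly int}) : Prop :=
  k != 0 /\ forall d : int, (forall i, (d %| k`_i)%Z) -> `|d| = 1.

From HB Require Import structures.
From mathcomp Require Import all_boot all_order all_algebra.
From mathcomp Require Import finfield ring.
From Stdlib Require Import FunctionalExtensionality.
Import Order.TTheory GRing.Theory Num.Theory.
Set Implicit Arguments. Unset Strict Implicit. Unset Printing Implicit Defensive.
Local Open Scope ring_scope.

(* Over Z[q] define gamma_n by the twisted convolution identity
   [n]_g = sum_(d | n) [d]_h Psi^d(gamma_(n/d)).  If n divides every coefficient of gamma_n,
   then omega(a)_n = sum_(e | n) (gamma_(n/e) / (n/e))(q) Psi^(n/e)(a_e) is natural, additive and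
   unitriangular (hence bijective), and phibar^g = phibar^h o omega.  The divisibility is checked
   one prime p at a time.  If p divides c1 and c2, then p divides 1 - g and 1 - h, and the p-part
   of n divides [n]_g.  Otherwise p does not divide the content of c1 (1 - h), and by Gauss'
   lemma it suffices to bound the p-adic valuation of c1 (1 - h) gamma_n; subtracting Psi^p of the
   identity at n/p from the identity at n leaves differences Psi^p(f)^m - f^(pm), which are
   divisible by p^(v_p(m)+1) because Psi^p(f) = f^p mod p.
   Conversely, evaluating the factorization over Z[q] at (1, 0, 0, ...) gives [p]_g = [p]_h
   mod p, that is (1 - g)^(p-1) = (1 - h)^(p-1) in F_p[q], for every prime p.  Hence 1 - g and
   1 - h are divisible by the same primes, and comparing them modulo large primes shows that they
   are proportional, so they have the same primitive part. *)


Definition coef_dvd (m : int) (f : {poly int}) : Prop := forall i, (m %| f`_i)%Z.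

Lemma coef_dvd0 m : coef_dvd m 0.
Proof. by move=> i; rewrite coef0 dvdz0. Qed.

Lemma coef_dvd1 f : coef_dvd 1 f.
Proof. by move=> i; rewrite dvd1z. Qed.

Lemma coef_dvdD m f g : coef_dvd m f -> coef_dvd m g -> coef_dvd m (f + g).
Proof. by move=> hf hg i; rewrite coefD rpredD. Qed.

Lemma coef_dvdN m f : coef_dvd m f -> coef_dvd m (- f).
Proof. by move=> hf i; rewrite coefN rpredN. Qed.

Lemma coef_dvdB m f g : coef_dvd m f -> coef_dvd m g -> coef_dvd m (f - g).
Proof. by move=> hf hg; apply: coef_dvdD => //; apply: coef_dvdN. Qed.

Lemma coef_dvd_sum m (I : Type) (r : seq I) (P : pred I) (F : I -> {poly int}) :
  (forall i, P i -> coef_dvd m (F i)) -> coef_dvd m (\sum_(i <- r | P i) F i).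
Proof. by move=> H; elim/big_ind: _ => //; [exact: coef_dvd0 | exact: coef_dvdD]. Qed.

Lemma coef_dvd_mul a b f g :
  coef_dvd a f -> coef_dvd b g -> coef_dvd (a * b) (f * g).
Proof.
by move=> hf hg i; rewrite coefM; apply: rpred_sum => j _; apply: dvdz_mul.
Qed.

Lemma coef_dvdMr a f g : coef_dvd a f -> coef_dvd a (f * g).
Proof. by move=> hf; rewrite -[a]mulr1; apply: coef_dvd_mul => //; apply: coef_dvd1. Qed.

Lemma coef_dvdMl a f g : coef_dvd a g -> coef_dvd a (f * g).
Proof. by move=> hg; rewrite -[a]mul1r; apply: coef_dvd_mul => //; apply: coef_dvd1. Qed.

Lemma coef_dvd_trans a b f : (a %| b)%Z -> coef_dvd b f -> coef_dvd a f.
Proof. by move=> hab hf i; apply: dvdz_trans hab (hf i). Qed.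

Lemma coef_dvdCM a c f : (a %| c)%Z -> coef_dvd a (c%:P * f).
Proof. by move=> ac i; rewrite coefCM dvdz_mulr. Qed.

Lemma coef_dvd_natr (p : nat) : coef_dvd p%:Z p%:R.
Proof. by move=> i; rewrite -polyC_natr coefC; case: eqP; rewrite ?natz ?dvdz0. Qed.

Lemma coef_dvd_subXX c a b s : coef_dvd c (a - b) -> coef_dvd c (a ^+ s - b ^+ s).
Proof. by move=> h; rewrite subrXX; apply: coef_dvdMr. Qed.

Lemma coef_dvd_contents m f : coef_dvd m f <-> (m %| zcontents f)%Z.
Proof.
rewrite dvdz_contents; split; first by move=> hf; apply/polyOverP => i; apply: hf.
by move/polyOverP => hf i; apply: hf.
Qed.

Lemma coef_dvd_gauss (p : nat) r x g : prime p -> ~ coef_dvd p%:Z x ->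
  coef_dvd (p ^ r)%N%:Z (x * g) -> coef_dvd (p ^ r)%N%:Z g.
Proof.
move=> pp nx /coef_dvd_contents; rewrite zcontentsM => h; apply/coef_dvd_contents.
rewrite -(@Gauss_dvdzr _ (zcontents x)) // coprimezE /=.
apply: coprimeXl; rewrite prime_coprime //.
by apply/negP => hd; apply: nx; apply/coef_dvd_contents; rewrite dvdzE.
Qed.

Lemma coef_dvd_partn n f :
  (0 < n)%N -> (forall p, prime p -> coef_dvd (n`_p)%:Z f) -> coef_dvd n%:Z f.
Proof.
move=> n0 H i; rewrite dvdzE /=; apply/dvdn_partP => // p.
by rewrite mem_primes => /and3P [pp _ _]; have := H p pp i; rewrite dvdzE.
Qed.

Lemma coef_dvd_large_primes f B :
  (forall p, prime p -> (B < p)%N -> coef_dvd p%:Z f) -> f = 0.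
Proof.
move=> H; apply/polyP => i; rewrite coef0.
have [p hp pp] := prime_above (maxn B `|f`_i|).
have /(_ i) := H p pp (leq_ltn_trans (leq_maxl _ _) hp).
rewrite dvdzE /=; have [/eqP|fi0 /(dvdn_leq fi0) hle] := posnP (absz f`_i).
  by rewrite absz_eq0 => /eqP.
by move: (leq_ltn_trans hle (leq_ltn_trans (leq_maxr _ _) hp)); rewrite ltnn.
Qed.

Definition divz_coefs (m : int) (f : {poly int}) : {poly int} :=
  \poly_(i < size f) (f`_i %/ m)%Z.

Lemma divz_coefsK m f : coef_dvd m f -> m *: divz_coefs m f = f.
Proof.
move=> hf; apply/polyP => i; rewrite coefZ coef_poly.
by case: ltnP => hi; [rewrite mulrC divzK | rewrite mulr0 nth_default].
Qed.

Definition adams (j : nat) : {poly int} -> {poly int} := comp_poly 'X^j.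
HB.instance Definition _ j := GRing.RMorphism.copy (adams j) (comp_poly 'X^j).

Lemma adams_id f : adams 1 f = f.
Proof. by rewrite /adams expr1 comp_polyXr. Qed.

Lemma adamsC j c : adams j c%:P = c%:P.
Proof. exact: comp_polyC. Qed.

Lemma adams_comp i j f : adams i (adams j f) = adams (i * j) f.
Proof. by rewrite /adams -comp_polyA comp_Xn_poly -exprM. Qed.

Lemma coef_dvd_adams m j f : (0 < j)%N -> coef_dvd m f -> coef_dvd m (adams j f).
Proof.
move=> j0 hf i; rewrite /adams coef_comp_poly_Xn //.
by case: ifP => _; [apply: hf | apply: dvdz0].
Qed.

Section Reduction.
Variable p : nat.
Hypothesis pp : prime p.

Definition redp : {poly int} -> {poly 'F_p} := map_poly intr.
HB.instance Definition _ := GRing.RMorphism.copy redp (map_poly intr).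

Lemma coef_dvd_redp f : coef_dvd p%:Z f <-> redp f = 0.
Proof.
rewrite -polyP; split=> hf i; have := hf i; rewrite coef_map coef0 /=.
  by rewrite (dvdz_pcharf (pchar_Fp pp)) => /eqP.
by move/eqP; rewrite -(dvdz_pcharf (pchar_Fp pp)).
Qed.

Lemma Frobenius_poly (f : {poly 'F_p}) : f ^+ p = f \Po 'X^p.
Proof.
have hp : p \in [pchar {poly 'F_p}] by rewrite pchar_poly pchar_Fp.
elim/poly_ind: f => [|q c IH]; first by rewrite comp_poly0 expr0n gtn_eqF ?prime_gt0.
rewrite comp_poly_MXaddC -IH.
have := pFrobenius_autD_comm hp (mulrC (q * 'X) c%:P).
rewrite !pFrobenius_autE => ->.
by rewrite exprMn -polyC_exp -{2}[c]expf_card card_Fp.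
Qed.

Lemma coef_dvd_Frobenius f : coef_dvd p%:Z (adams p f - f ^+ p).
Proof.
apply/coef_dvd_redp; rewrite /redp rmorphB rmorphXn /= /adams map_comp_poly.
by rewrite map_polyXn -Frobenius_poly subrr.
Qed.

End Reduction.

(* a^p - b^p = (a - b) * sum_i a^(p-1-i) b^i, and the sum is p b^(p-1) = 0 modulo p. *)
Lemma coef_dvd_lift (p k : nat) a b : (0 < p)%N -> (0 < k)%N ->
  coef_dvd (p%:Z ^+ k) (a - b) -> coef_dvd (p%:Z ^+ k.+1) (a ^+ p - b ^+ p).
Proof.
case: p => // p _ k0 hk; rewrite exprS mulrC subrXX /=.
apply: coef_dvd_mul => //.
have hp : coef_dvd p.+1%:Z (a - b).
  by apply: coef_dvd_trans hk; rewrite -[X in (X %| _)%Z]expr1 dvdz_exp2l.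
have -> : \sum_(i < p.+1) a ^+ (p - i) * b ^+ i =
    \sum_(i < p.+1) (a ^+ (p - i) - b ^+ (p - i)) * b ^+ i + p.+1%:R * b ^+ p.
  rewrite mulr_natl -[in X in _ *+ X](card_ord p.+1) -sumr_const -big_split /=.
  by apply: eq_bigr => i _; rewrite mulrBl -exprD subnK ?leq_ord // subrK.
apply: coef_dvdD; last exact/coef_dvdMr/coef_dvd_natr.
by apply: coef_dvd_sum => i _; apply/coef_dvdMr/coef_dvd_subXX.
Qed.

Lemma coef_dvd_subX_logn (p : nat) a b m : prime p -> (0 < m)%N ->
  coef_dvd p%:Z (a - b) -> coef_dvd (p%:Z ^+ (logn p m).+1) (a ^+ m - b ^+ m).
Proof.
move=> pp m0 h.
have hv v : coef_dvd (p%:Z ^+ v.+1) (a ^+ (p ^ v) - b ^+ (p ^ v)).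
  elim: v => [|v IH]; first by rewrite !expn0 !expr1.
  by rewrite expnSr !exprM; apply: coef_dvd_lift => //; apply: prime_gt0.
rewrite -[in a ^+ m](partnC p m0) -[in b ^+ m](partnC p m0) p_part !exprM.
exact: coef_dvd_subXX (hv _).
Qed.

Lemma qint1 (R : comPzRingType) (x : R) : qint 1 x = 1.
Proof. by rewrite /qint big_ord1 expr0. Qed.

Lemma qint_one (R : comPzRingType) n : qint n (1 : R) = n%:R.
Proof. by rewrite /qint (eq_bigr (fun=> 1)) ?sumr_const ?card_ord // => i; rewrite expr1n. Qed.

Lemma qint_telescope (R : comPzRingType) n (x : R) : (1 - x) * qint n x = 1 - x ^+ n.
Proof.
elim: n => [|n IH]; first by rewrite /qint big_ord0 mulr0 expr0 subrr.
by rewrite /qint big_ord_recr /= mulrDr -/(qint n x) IH exprSr; ring.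
Qed.

Lemma rmorph_qint (R S : comPzRingType) (f : {rmorphism R -> S}) n x :
  f (qint n x) = qint n (f x).
Proof. by rewrite rmorph_sum; apply: eq_bigr => i _; rewrite rmorphXn. Qed.

Lemma qintM (R : idomainType) a b (x : R) : qint (a * b) x = qint a x * qint b (x ^+ a).
Proof.
have [->|x1] := eqVneq x 1; first by rewrite expr1n !qint_one natrM.
have nz : 1 - x != 0 by rewrite subr_eq0 eq_sym.
by apply: (mulfI nz); rewrite qint_telescope mulrA !qint_telescope -exprM.
Qed.

Lemma qint_pchar (R : idomainType) (p : nat) (x : R) :
  p \in [pchar R] -> qint p x = (1 - x) ^+ p.-1.
Proof.
move=> pR; have p1 := prime_gt1 (pcharf_prime pR).
have [->|x1] := eqVneq x 1.
  by rewrite qint_one (pcharf0 pR) subrr expr0n; case: p p1 {pR} => [|[|]].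
have nz : 1 - x != 0 by rewrite subr_eq0 eq_sym.
apply: (mulfI nz); rewrite qint_telescope -exprS prednK ?(ltnW p1) //.
have := pFrobenius_autB_comm pR (mulrC 1 x).
by rewrite !pFrobenius_autE expr1n => ->.
Qed.

Lemma coef_dvd_qint_prime (p : nat) g : coef_dvd p%:Z (1 - g) -> coef_dvd p%:Z (qint p g).
Proof.
move=> h; have -> : qint p g = p%:R - \sum_(i < p) (1 - g ^+ i).
  by rewrite sumrB sumr_const card_ord opprB addrC subrK.
apply: coef_dvdB; first exact: coef_dvd_natr.
by apply: coef_dvd_sum => i _; rewrite -(expr1n _ i); apply: coef_dvd_subXX.
Qed.

Lemma coef_dvd_qint (p : nat) g n : prime p -> (0 < n)%N ->
  coef_dvd p%:Z (1 - g) -> coef_dvd (n`_p)%:Z (qint n g).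
Proof.
move=> pp; have p0 := prime_gt0 pp.
elim/ltn_ind: n g => n IH g n0 hg.
have [pn|pn] := boolP (p %| n)%N; last first.
  by rewrite part_p'nat ?p'natE //; apply: coef_dvd1.
have [m hm] := dvdnP pn; rewrite hm mulnC in n0 *.
have m0 : (0 < m)%N by move: n0; rewrite muln_gt0 => /andP [].
rewrite partnM // part_pnat_id ?pnat_id // PoszM qintM.
apply: coef_dvd_mul; first exact: coef_dvd_qint_prime.
apply: IH => //; first by rewrite hm ltn_Pmulr ?prime_gt1.
by rewrite -(expr1n _ p); apply: coef_dvd_subXX.
Qed.

Lemma divisors_gt0 n d : d \in divisors n -> (0 < d)%N.
Proof.
case: n => [|n]; first by rewrite inE => /eqP ->.
by rewrite -dvdn_divisors // => /dvdn_gt0; apply.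
Qed.

Lemma divisors_gt1 n d : d \in divisors n -> d != 1%N -> (1 < d)%N.
Proof. by move=> /divisors_gt0 d0 d1; rewrite ltn_neqAle eq_sym d1. Qed.

Lemma divn_divisors_gt0 n d : (0 < n)%N -> d \in divisors n -> (0 < n %/ d)%N.
Proof.
move=> n0 hd; rewrite divn_gt0 ?(divisors_gt0 hd) //.
by apply: dvdn_leq; rewrite // dvdn_divisors.
Qed.

Section DivisorSums.
Variable V : nmodType.

Lemma big_divisors_dvd (e n : nat) (F : nat -> V) : (0 < n)%N -> (e %| n)%N ->
  \sum_(d <- divisors n | (e %| d)%N) F d = \sum_(t <- divisors (n %/ e)) F (e * t)%N.
Proof.
move=> n0 en; have e0 : (0 < e)%N := dvdn_gt0 n0 en.
have ne0 : (0 < n %/ e)%N by rewrite divn_gt0 // dvdn_leq.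
rewrite -big_filter -(big_map (muln e) xpredT); apply/perm_big/uniq_perm.
- by rewrite filter_uniq // divisors_uniq.
- by rewrite map_inj_uniq ?divisors_uniq // => x y /eqP; rewrite eqn_pmul2l // => /eqP.
move=> x; rewrite mem_filter -dvdn_divisors //; apply/andP/mapP.
  case=> /dvdnP [t ->] hx; exists t; last by rewrite mulnC.
  by rewrite -dvdn_divisors // dvdn_divRL // mulnC.
case=> t; rewrite -dvdn_divisors // => ht ->; split; first exact: dvdn_mulr.
by move: ht; rewrite dvdn_divRL // mulnC.
Qed.

Lemma big_divisors_rev (n : nat) (F : nat -> V) : (0 < n)%N ->
  \sum_(d <- divisors n) F d = \sum_(d <- divisors n) F (n %/ d)%N.
Proof.
move=> n0; rewrite -(big_map (divn n) xpredT); apply/perm_big/uniq_perm.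
- exact: divisors_uniq.
- rewrite map_inj_in_uniq ?divisors_uniq // => x y.
  rewrite -!dvdn_divisors // => hx hy hxy.
  have q0 : (0 < n %/ x)%N by rewrite divn_gt0 ?(dvdn_gt0 n0 hx) // dvdn_leq.
  by apply/eqP; rewrite -(eqn_pmul2l q0) {2}hxy !divnK.
move=> x; rewrite -dvdn_divisors //; apply/idP/mapP => [hx|[y]].
  exists (n %/ x)%N; first by rewrite -dvdn_divisors // dvdn_div.
  by rewrite -{1}(divnK hx) mulKn // divn_gt0 ?(dvdn_gt0 n0 hx) // dvdn_leq.
by rewrite -dvdn_divisors // => hy ->; apply: dvdn_div.
Qed.

Lemma exchange_big_divisors (n : nat) (F : nat -> nat -> V) : (0 < n)%N ->
  \sum_(d <- divisors n) \sum_(e <- divisors d) F d e =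
  \sum_(e <- divisors n) \sum_(d <- divisors n | (e %| d)%N) F d e.
Proof.
move=> n0; rewrite [RHS](exchange_big_dep xpredT) //= big_seq [RHS]big_seq.
apply: eq_bigr => d; rewrite -dvdn_divisors // => hd.
have d0 : (0 < d)%N := dvdn_gt0 n0 hd.
rewrite -[RHS]big_filter; apply/perm_big/uniq_perm.
- exact: divisors_uniq.
- by rewrite filter_uniq // divisors_uniq.
move=> e; rewrite mem_filter -!dvdn_divisors //.
by apply/idP/andP => [he|[]//]; split => //; apply: dvdn_trans he hd.
Qed.

End DivisorSums.

Section StrongRecursion.
Variables (T : Type) (F : (nat -> T) -> nat -> T) (t0 : T).

(* [t0] is only returned when the fuel runs out, which never happens for [nat_fix]. *)
Fixpoint nat_fix_iter (k n : nat) : T :=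
  if k is k'.+1 then F (nat_fix_iter k') n else t0.

Definition nat_fix (n : nat) : T := nat_fix_iter n.+1 n.

Hypothesis F_ext : forall f f' n, (forall m, (m < n)%N -> f m = f' m) -> F f n = F f' n.

Lemma nat_fixE n : nat_fix n = F nat_fix n.
Proof.
have iter_stable k1 k2 m : (m < k1)%N -> (m < k2)%N ->
    nat_fix_iter k1 m = nat_fix_iter k2 m.
  elim: k1 k2 m => [|k1 IH] [|k2] m //= h1 h2; apply: F_ext => i hi.
  by apply: IH; apply: leq_trans hi _; rewrite -ltnS.
by rewrite /nat_fix /=; apply: F_ext => m hm; apply: (iter_stable _ _ _ hm (ltnSn m)).
Qed.

End StrongRecursion.

Lemma additive_nmod_morphism (U V : zmodType) (f : U -> V) :
  {morph f : x y / x + y} -> nmod_morphism f.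
Proof. by move=> fD; split => //; apply: (@addrI _ (f 0)); rewrite -fD !addr0. Qed.

Section PsiRing.
Variable R : psiQRing.
Implicit Types (x : R) (f g : {poly int}).

Definition psi_rmorph n (n0 : (0 < n)%N) : {rmorphism R -> R} :=
  HB.pack (@psi R n)
    (GRing.isNmodMorphism.Build _ _ (@psi R n) (additive_nmod_morphism (psiD n0)))
    (GRing.isMonoidMorphism.Build _ _ (@psi R n) (psi1 R n0, psiM n0)).

Lemma psi_sum n (I : Type) (r : seq I) (P : pred I) (F : I -> R) : (0 < n)%N ->
  @psi R n (\sum_(i <- r | P i) F i) = \sum_(i <- r | P i) @psi R n (F i).
Proof. by move=> n0; apply: (rmorph_sum (psi_rmorph n0)). Qed.

Lemma psiX n x k : (0 < n)%N -> @psi R n (x ^+ k) = @psi R n x ^+ k.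
Proof. by move=> n0; apply: (rmorphXn (psi_rmorph n0)). Qed.

Lemma psi_int n z : (0 < n)%N -> @psi R n z%:~R = z%:~R.
Proof. by move=> n0; apply: (rmorph_int (psi_rmorph n0)). Qed.

Lemma evalq_wide f n : (size f <= n)%N ->
  evalq R f = \sum_(i < n) (f`_i)%:~R * @qe R ^+ i.
Proof.
move=> hn; rewrite /evalq (big_ord_widen n (fun i => (f`_i)%:~R * @qe R ^+ i) hn).
rewrite big_mkcond; apply: eq_bigr => i _; case: ltnP => // hi.
by rewrite nth_default // mul0r.
Qed.

Lemma evalq0 : evalq R 0 = 0.
Proof. by rewrite /evalq size_poly0 big_ord0. Qed.

Lemma evalqD f g : evalq R (f + g) = evalq R f + evalq R g.
Proof.
set n := maxn (size f) (size g).
rewrite !(@evalq_wide _ n) ?leq_maxl ?leq_maxr ?size_polyD //.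
by rewrite -big_split; apply: eq_bigr => i _; rewrite coefD intrD mulrDl.
Qed.

HB.instance Definition _ :=
  GRing.isNmodMorphism.Build {poly int} R (evalq R) (evalq0, evalqD).

Lemma evalqC c : evalq R c%:P = c%:~R.
Proof.
by rewrite (@evalq_wide _ 1) ?size_polyC_leq1 // big_ord1 coefC /= expr0 mulr1.
Qed.

Lemma evalqZ c f : evalq R (c *: f) = c%:~R * evalq R f.
Proof.
rewrite !(@evalq_wide _ (size f)) ?size_scale_leq // mulr_sumr.
by apply: eq_bigr => i _; rewrite coefZ intrM mulrA.
Qed.

Lemma evalq_XnM i f : evalq R ('X^i * f) = @qe R ^+ i * evalq R f.
Proof.
have hs : (size ('X^i * f)%R <= i + size f)%N.
  by apply: leq_trans (size_mul_leq _ _) _; rewrite size_polyXn addSn.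
rewrite (evalq_wide hs) big_split_ord /= big1 ?add0r => [|j _]; last first.
  by rewrite coefXnM /= ltn_ord mul0r.
rewrite /evalq mulr_sumr; apply: eq_bigr => j _.
by rewrite coefXnM /= ltnNge leq_addr /= addKn exprD mulrCA.
Qed.

Lemma evalqM f g : evalq R (f * g) = evalq R f * evalq R g.
Proof.
rewrite -[in LHS](coefK f) poly_def mulr_suml raddf_sum /= [in RHS]/evalq mulr_suml.
by apply: eq_bigr => i _; rewrite -scalerAl evalqZ evalq_XnM mulrA.
Qed.

Lemma evalq1 : evalq R 1 = 1.
Proof. by rewrite -polyC1 evalqC. Qed.

HB.instance Definition _ :=
  GRing.isMonoidMorphism.Build {poly int} R (evalq R) (evalq1, evalqM).

Lemma evalqX : evalq R 'X = @qe R.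
Proof.
by rewrite /evalq size_polyX big_ord_recl big_ord1 !coefX /= mul0r add0r expr1 mul1r.
Qed.

Lemma psi_evalq j f : (0 < j)%N -> @psi R j (evalq R f) = evalq R (adams j f).
Proof.
move=> j0; rewrite /adams comp_polyE rmorph_sum /= {1}/evalq psi_sum //.
apply: eq_bigr => i _; rewrite psiM // psi_int // psiX // psi_q //.
by rewrite evalqZ !rmorphXn -[in LHS]evalqX.
Qed.

End PsiRing.

Lemma psiQ_morph_evalq (R S : psiQRing) (f : R -> S) g :
  is_psiQ_morph f -> f (evalq R g) = evalq S g.
Proof.
case=> fD fM f1 fq _.
pose fr : {rmorphism R -> S} :=
  HB.pack f (GRing.isNmodMorphism.Build _ _ f (additive_nmod_morphism fD))
            (GRing.isMonoidMorphism.Build _ _ f (f1, fM)).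
rewrite /evalq -[f _]/(fr _) rmorph_sum; apply: eq_bigr => i _.
by rewrite rmorphM rmorph_int rmorphXn -[fr _]/(f _) fq.
Qed.

Section Gamma.
Variables g h : {poly int}.

Definition gamma_step (gam : nat -> {poly int}) (n : nat) : {poly int} :=
  qint n g - \sum_(d <- divisors n | d != 1%N) qint d h * adams d (gam (n %/ d)%N).

Definition gamma : nat -> {poly int} := nat_fix gamma_step 0.

Lemma gammaE n : gamma n = gamma_step gamma n.
Proof.
apply: nat_fixE => {}f f' {}n H; congr (_ - _).
rewrite big_seq_cond [RHS]big_seq_cond; apply: eq_bigr => d /andP [hd d1].
have [n0|n0] := posnP n; first by move: hd d1; rewrite n0 inE => /eqP ->.
by rewrite H // ltn_Pdiv // (divisors_gt1 hd d1).
Qed.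

Lemma qint_gamma n : (0 < n)%N ->
  qint n g = \sum_(d <- divisors n) qint d h * adams d (gamma (n %/ d)%N).
Proof.
move=> n0; rewrite (bigD1_seq 1%N) ?divisor1 ?divisors_uniq //=.
by rewrite qint1 mul1r adams_id divn1 gammaE subrK.
Qed.

Lemma gamma1 : gamma 1 = 1.
Proof.
have := qint_gamma (ltn0Sn 0); rewrite (_ : divisors 1 = [:: 1%N]) // big_seq1.
by rewrite !qint1 mul1r adams_id divn1.
Qed.

Lemma coef_dvd_gamma_pcommon (p : nat) n : prime p -> (0 < n)%N ->
  coef_dvd p%:Z (1 - g) -> coef_dvd p%:Z (1 - h) -> coef_dvd (n`_p)%:Z (gamma n).
Proof.
move=> pp + hg hh; elim/ltn_ind: n => n IH n0.
rewrite gammaE; apply: coef_dvdB; first exact: coef_dvd_qint.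
rewrite big_seq_cond; apply: coef_dvd_sum => d /andP [hd d1].
have d0 := divisors_gt0 hd; have nd0 := divn_divisors_gt0 n0 hd.
have dn : (d %| n)%N by rewrite dvdn_divisors.
rewrite -[in X in coef_dvd X](divnK dn).
rewrite partnM // PoszM mulrC; apply: coef_dvd_mul; first exact: coef_dvd_qint.
apply: coef_dvd_adams => //; apply: IH => //.
by rewrite ltn_Pdiv // (divisors_gt1 hd d1).
Qed.

End Gamma.

Section GammaCoprime.
Variables (g h : {poly int}) (c1 c2 : int) (p : nat).
Hypotheses (pp : prime p) (hc : c2%:P * (1 - g) = c1%:P * (1 - h)).

Let gam := gamma g h.

Lemma gamma_scaled n : (0 < n)%N ->
  c2%:P * (1 - g ^+ n) =
  c1%:P * \sum_(d <- divisors n) (1 - h ^+ d) * adams d (gam (n %/ d)%N).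
Proof.
move=> n0; rewrite -qint_telescope mulrA hc -mulrA (qint_gamma g h n0) mulr_sumr.
by congr (_ * _); apply: eq_bigr => d _; rewrite mulrA qint_telescope.
Qed.

(* Subtract [adams p] of the identity at [m] from the identity at [p * m]. *)
Lemma gamma_scaled_pmul m : (0 < m)%N ->
  c1%:P * (1 - h) * gam (p * m)%N =
  c2%:P * (adams p g ^+ m - g ^+ (p * m)) -
  c1%:P * (\sum_(d <- divisors (p * m) | (d != 1%N) && ~~ (p %| d)%N)
             (1 - h ^+ d) * adams d (gam (p * m %/ d)%N) +
           \sum_(t <- divisors m)
             (adams p h ^+ t - h ^+ (p * t)) * adams (p * t) (gam (m %/ t)%N)).
Proof.
move=> m0; have p0 := prime_gt0 pp; have n0 : (0 < p * m)%N by rewrite muln_gt0 p0.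
have := congr1 (adams p) (gamma_scaled m0).
rewrite !rmorphM !rmorphB !rmorph1 rmorphXn /= !adamsC rmorph_sum /= => Fm.
have := gamma_scaled n0.
rewrite (bigD1_seq 1%N) ?divisor1 ?divisors_uniq //= divn1 adams_id expr1.
rewrite (bigID (fun d => p %| d)%N) /= (eq_bigl (fun d => p %| d)%N); last first.
  move=> d; apply/andP/idP => [[]//|pd]; split=> //.
  by apply: contraTneq pd => ->; rewrite dvdn1 neq_ltn (prime_gt1 pp) orbT.
rewrite big_divisors_dvd ?dvdn_mulr // mulKn //.
set U := \sum_(t <- divisors m) adams p _ in Fm.
have -> : \sum_(t <- divisors m) (1 - h ^+ (p * t)) * adams (p * t) (gam (p * m %/ (p * t))%N) =
    \sum_(t <- divisors m) (adams p h ^+ t - h ^+ (p * t)) * adams (p * t) (gam (m %/ t)%N) + U.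
  rewrite /U -big_split /=; apply: eq_bigr => t _.
  by rewrite divnMl // rmorphM /= [adams p (1 - _)]rmorphB rmorph1 rmorphXn /= adams_comp; ring.
move=> E; have -> : c2%:P * (adams p g ^+ m - g ^+ (p * m)) =
  c2%:P * (1 - g ^+ (p * m)) - c2%:P * (1 - adams p g ^+ m) by ring.
by rewrite E Fm; ring.
Qed.

Lemma coef_dvd_gamma_pcoprime n : ~ coef_dvd p%:Z (c1%:P * (1 - h)) -> (0 < n)%N ->
  coef_dvd (n`_p)%:Z (gam n).
Proof.
move=> hnd; have p0 := prime_gt0 pp; elim/ltn_ind: n => n IH n0.
rewrite p_part; apply: (coef_dvd_gauss pp hnd); rewrite -p_part.
have [pn|pn] := boolP (p %| n)%N; last by rewrite part_p'nat ?p'natE //; apply: coef_dvd1.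
have [m def_n] := dvdnP pn; rewrite def_n mulnC in n0 IH *.
have m0 : (0 < m)%N by move: n0; rewrite muln_gt0 => /andP [].
have partpm : ((p * m)`_p)%:Z = p%:Z ^+ (logn p m).+1.
  by rewrite partnM // part_pnat_id ?pnat_id // p_part -!natz natrM natrX exprS.
rewrite gamma_scaled_pmul //; apply: coef_dvdB; apply: coef_dvdMl.
  by rewrite partpm exprM; apply: coef_dvd_subX_logn => //; apply: coef_dvd_Frobenius.
apply: coef_dvdD.
  rewrite big_seq_cond; apply: coef_dvd_sum => d /and3P [hd d1 pd].
  have dn : (d %| p * m)%N by rewrite dvdn_divisors.
  apply/coef_dvdMl/coef_dvd_adams; first exact: divisors_gt0 hd.
  rewrite -{1}(divnK dn) partnM ?(divisors_gt0 hd) ?divn_divisors_gt0 //.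
  rewrite [(d`_p)%N]part_p'nat ?p'natE // muln1.
  by apply: IH; rewrite ?divn_divisors_gt0 // ltn_Pdiv // (divisors_gt1 hd d1).
rewrite big_seq; apply: coef_dvd_sum => t ht.
have tm : (t %| m)%N by rewrite dvdn_divisors.
have t0 := divisors_gt0 ht; have mt0 := divn_divisors_gt0 m0 ht.
have -> : ((p * m)`_p)%:Z = p%:Z ^+ (logn p t).+1 * ((m %/ t)`_p)%:Z.
  by rewrite partpm -{1}(divnK tm) lognM // p_part -!natz natrX -exprD addSn addnC.
apply: coef_dvd_mul.
  by rewrite exprM; apply: coef_dvd_subX_logn => //; apply: coef_dvd_Frobenius.
apply: coef_dvd_adams; first by rewrite muln_gt0 p0.
apply: IH => //; apply: leq_ltn_trans (leq_div _ _) _.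
by rewrite ltn_Pmull ?prime_gt1.
Qed.

End GammaCoprime.

Lemma coef_dvd_gamma g h (c1 c2 : int) k :
  1 - g = c1%:P * k -> 1 - h = c2%:P * k ->
  (forall p : nat, prime p -> (p%:Z %| c1)%Z = (p%:Z %| c2)%Z) -> primitive_poly k ->
  forall n, (0 < n)%N -> coef_dvd n%:Z (gamma g h n).
Proof.
move=> hg hh hc [_ kprim] n n0; apply: coef_dvd_partn => // p pp.
have [pc1|pc1] := boolP (p%:Z %| c1)%Z.
  have pc2 : (p%:Z %| c2)%Z by rewrite -hc.
  by apply: coef_dvd_gamma_pcommon; rewrite // ?hg ?hh; apply: coef_dvdCM.
have pc2 : ~~ (p%:Z %| c2)%Z by rewrite -hc.
apply: (@coef_dvd_gamma_pcoprime g h c1 c2) => //; first by rewrite hg hh; ring.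
have cop c : ~~ (p%:Z %| c)%Z -> coprimez p%:Z c by rewrite coprimezE dvdzE /= prime_coprime.
rewrite hh mulrA -polyCM => hd.
have /eqP : `|p%:Z| = 1.
  by apply: kprim => i; have := hd i; rewrite coefCM Gauss_dvdzr // coprimezMr !cop.
by rewrite -natz normr_nat pnatr_eq1 gtn_eqF ?prime_gt1.
Qed.

Section Omega.
Variables g h : {poly int}.
Hypothesis gamma_dvd : forall n, (0 < n)%N -> coef_dvd n%:Z (gamma g h n).

Definition omega_coef (m : nat) : {poly int} := divz_coefs m%:Z (gamma g h m).

Lemma omega_coefK m : (0 < m)%N -> m%:R * omega_coef m = gamma g h m.
Proof. by move=> m0; rewrite mulr_natl -scaler_nat natz divz_coefsK //; apply: gamma_dvd. Qed.

Lemma omega_coef1 : omega_coef 1 = 1.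
Proof. by have := omega_coefK (ltn0Sn 0); rewrite mul1r gamma1. Qed.

Definition omega (R : psiQRing) (a : Gseq R) : Gseq R := fun i =>
  \sum_(e <- divisors i.+1)
    evalq R (omega_coef (i.+1 %/ e)) * @psi R (i.+1 %/ e)%N (a e.-1).

Lemma sum_omega_coef n e : (0 < n)%N -> (e %| n)%N ->
  \sum_(d <- divisors n | (e %| d)%N)
     d%:R * qint (n %/ d)%N h * adams (n %/ d)%N (omega_coef (d %/ e)%N)
  = e%:R * qint (n %/ e)%N g.
Proof.
move=> n0 en; rewrite big_divisors_dvd //.
have e0 : (0 < e)%N := dvdn_gt0 n0 en.
set N := (n %/ e)%N; have N0 : (0 < N)%N by rewrite divn_gt0 // dvdn_leq.
rewrite big_seq (eq_bigr (fun t => e%:R * (qint (N %/ t)%N h * adams (N %/ t)%N (gamma g h t)))).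
  rewrite -big_seq -mulr_sumr (qint_gamma g h N0) big_divisors_rev //.
  congr (_ * _); rewrite big_seq [RHS]big_seq; apply: eq_bigr => t ht.
  by rewrite divnA ?mulKn // dvdn_divisors.
move=> t ht; have t0 := divisors_gt0 ht.
have -> : n = (e * N)%N by rewrite mulnC divnK.
by rewrite divnMl // mulKn // -(omega_coefK t0) [adams _ (_ * _)]rmorphM rmorph_nat natrM; ring.
Qed.

Lemma omega_phibar (R : psiQRing) (a : Gseq R) : phibar h (omega a) = phibar g a.
Proof.
apply: functional_extensionality => i; rewrite /phibar /omega /=.
set n := i.+1; have n0 : (0 < n)%N by [].
transitivity (\sum_(d <- divisors n) \sum_(e <- divisors d)
   evalq R (d%:R * qint (n %/ d)%N h * adams (n %/ d)%N (omega_coef (d %/ e)%N))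
     * @psi R (n %/ e)%N (a e.-1)).
  rewrite big_seq [RHS]big_seq; apply: eq_bigr => d hd.
  have d0 := divisors_gt0 hd; have nd0 := divn_divisors_gt0 n0 hd.
  have dn : (d %| n)%N by rewrite dvdn_divisors.
  rewrite prednK // psi_sum // mulr_sumr big_seq [RHS]big_seq; apply: eq_bigr => e he.
  have ed : (e %| d)%N by rewrite dvdn_divisors.
  rewrite psiM // psi_comp ?divn_divisors_gt0 // muln_divA // divnK // psi_evalq //.
  by rewrite !rmorphM rmorph_nat /= rmorph_qint mulrA.
rewrite exchange_big_divisors // big_seq [RHS]big_seq; apply: eq_bigr => e he.
rewrite -mulr_suml -raddf_sum /= sum_omega_coef ?dvdn_divisors //.
by rewrite !rmorphM rmorph_nat /= rmorph_qint.
Qed.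

Lemma omegaD (R : psiQRing) (a b : Gseq R) :
  omega (fun i => a i + b i) = (fun i => omega a i + omega b i).
Proof.
apply: functional_extensionality => i; rewrite /omega -big_split /=.
rewrite big_seq [RHS]big_seq; apply: eq_bigr => e he.
by rewrite psiD ?divn_divisors_gt0 // mulrDr.
Qed.

Lemma omega_natural (R S : psiQRing) (f : R -> S) : is_psiQ_morph f ->
  forall a : Gseq R, omega (fun i => f (a i)) = (fun i => f (omega a i)).
Proof.
move=> hf a; apply: functional_extensionality => i; case: (hf) => fD fM _ _ fpsi.
rewrite /omega (big_morph f fD (additive_nmod_morphism fD).1).
rewrite big_seq [RHS]big_seq; apply: eq_bigr => e he.
by rewrite fM psiQ_morph_evalq // fpsi ?divn_divisors_gt0.
Qed.

Lemma omega_unitriangular (R : psiQRing) (a : Gseq R) i :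
  omega a i = a i + \sum_(e <- divisors i.+1 | e != i.+1)
     evalq R (omega_coef (i.+1 %/ e)) * @psi R (i.+1 %/ e)%N (a e.-1).
Proof.
rewrite /omega (bigD1_seq i.+1) ?divisors_id ?divisors_uniq //=.
by rewrite divnn /= omega_coef1 rmorph1 mul1r psi_id.
Qed.

Lemma divisors_pred_lt i e : e \in divisors i.+1 -> e != i.+1 -> (e.-1 < i)%N.
Proof.
move=> he ne; have e0 := divisors_gt0 he.
have : (e < i.+1)%N by rewrite ltn_neqAle ne dvdn_leq // dvdn_divisors.
by rewrite -(prednK e0) ltnS.
Qed.

Definition omega_inv_step (R : psiQRing) (b : Gseq R) (f : nat -> R) (i : nat) : R :=
  b i - \sum_(e <- divisors i.+1 | e != i.+1)
     evalq R (omega_coef (i.+1 %/ e)) * @psi R (i.+1 %/ e)%N (f e.-1).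

Definition omega_inv (R : psiQRing) (b : Gseq R) : Gseq R :=
  nat_fix (omega_inv_step b) 0.

Lemma omega_invK (R : psiQRing) : cancel (@omega_inv R) (@omega R).
Proof.
move=> b; apply: functional_extensionality => i.
rewrite omega_unitriangular /omega_inv nat_fixE ?subrK // => f f' n H.
congr (_ - _); rewrite big_seq_cond [RHS]big_seq_cond.
by apply: eq_bigr => e /andP [he ne]; rewrite H // divisors_pred_lt.
Qed.

Lemma omega_inj (R : psiQRing) : injective (@omega R).
Proof.
move=> a b hab; apply: functional_extensionality; elim/ltn_ind => i IH.
have := congr1 (fun F => F i) hab; rewrite /= !omega_unitriangular.
rewrite big_seq_cond [X in _ = _ + X]big_seq_cond.
rewrite (eq_bigr (fun e => evalq R (omega_coef (i.+1 %/ e)) * @psi R (i.+1 %/ e)%N (b e.-1))).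
  by move/addIr.
by move=> e /andP [he ne]; rewrite IH // divisors_pred_lt.
Qed.

Lemma omega_bij (R : psiQRing) : bijective (@omega R).
Proof.
exists (@omega_inv R); last exact: omega_invK.
by move=> a; apply: omega_inj; rewrite omega_invK.
Qed.

End Omega.

(* The quotient (U^n - V^n) / (U - V) has coefficient n * lead_coef U ^ (n-1) in top degree. *)
Lemma poly_expf_inj (F : idomainType) (U V : {poly F}) n :
  U != 0 -> size U = size V -> lead_coef U = lead_coef V -> (0 < n)%N ->
  n%:R != 0 :> F -> U ^+ n = V ^+ n -> U = V.
Proof.
case: n => // n U0 sUV lUV _ nF; have V0 : V != 0 by rewrite -size_poly_eq0 -sUV size_poly_eq0.
set S := \sum_(i < n.+1) U ^+ (n - i) * V ^+ i.
have topS : S`_((size U).-1 * n) = n.+1%:R * lead_coef U ^+ n.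
  rewrite coef_sum (eq_bigr (fun=> lead_coef U ^+ n)) => [|i _].
    by rewrite sumr_const card_ord mulr_natl.
  have -> : ((size U).-1 * n)%N = (size (U ^+ (n - i) * V ^+ i)).-1.
    rewrite size_mul ?expf_neq0 // (polySpred (expf_neq0 _ U0)) (polySpred (expf_neq0 _ V0)).
    by rewrite addSn addnS /= !size_exp -sUV -mulnDr subnK ?leq_ord.
  by rewrite -lead_coefE lead_coefM !lead_coef_exp -lUV -exprD subnK ?leq_ord.
move/eqP; rewrite -subr_eq0 subrXX -/S mulf_eq0 subr_eq0 => /orP [/eqP //|/eqP S0].
move: topS; rewrite S0 coef0 => /esym/eqP.
by rewrite mulf_eq0 (negbTE nF) expf_eq0 lead_coef_eq0 (negbTE U0) andbF.
Qed.

Lemma expf_card_pred (F : finFieldType) (x : F) : x != 0 -> x ^+ #|F|.-1 = 1.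
Proof.
move=> x0; apply: (mulfI x0); rewrite mulr1 -exprS prednK ?expf_card //.
by apply/card_gt0P; exists 0.
Qed.

Lemma intr_Fp_neq0 p (z : int) : prime p -> z != 0 -> (`|z| < p)%N -> (z%:~R : 'F_p) != 0.
Proof.
move=> pp z0 hz; rewrite -(dvdz_pcharf (pchar_Fp pp)) dvdzE /=.
by apply: contraTN hz => /dvdn_leq; rewrite -leqNgt absz_gt0; apply.
Qed.

Lemma primitive_zprimitive f : f != 0 -> primitive_poly (zprimitive f).
Proof.
move=> f0; split; first by rewrite zprimitive_eq0.
move=> d /coef_dvd_contents; rewrite zcontents_primitive f0 dvdz1 => /eqP hd.
by rewrite -abszE hd.
Qed.

Section ReductionPowers.
Variables X Y : {poly int}.
Hypothesis XY : forall p, prime p -> redp p X ^+ p.-1 = redp p Y ^+ p.-1.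

Lemma coef_dvd_pow_equiv p : prime p -> coef_dvd p%:Z X <-> coef_dvd p%:Z Y.
Proof.
move=> pp; have p1 : (0 < p.-1)%N by rewrite -ltnS prednK ?(prime_gt0 pp) ?(prime_gt1 pp).
have E f : coef_dvd p%:Z f <-> redp p f ^+ p.-1 = 0.
  rewrite coef_dvd_redp //; split=> [->|/eqP]; first by rewrite expr0n gtn_eqF.
  by rewrite expf_eq0 p1 => /eqP.
by rewrite !E XY.
Qed.

Lemma scale_lead_coef_eq : X != 0 -> Y != 0 -> lead_coef Y *: X = lead_coef X *: Y.
Proof.
set a := lead_coef X; set b := lead_coef Y => X0 Y0.
have a0 : a != 0 by rewrite lead_coef_eq0.
have b0 : b != 0 by rewrite lead_coef_eq0.
apply/eqP; rewrite -subr_eq0; apply/eqP.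
apply: (@coef_dvd_large_primes _ (absz (a * b))) => p pp hp.
have p1 : (0 < p.-1)%N by rewrite -ltnS prednK ?(prime_gt0 pp) ?(prime_gt1 pp).
have pa : (a%:~R : 'F_p) != 0.
  by apply: (intr_Fp_neq0 pp a0); apply: leq_ltn_trans hp; rewrite abszM leq_pmulr ?absz_gt0.
have pb : (b%:~R : 'F_p) != 0.
  by apply: (intr_Fp_neq0 pp b0); apply: leq_ltn_trans hp; rewrite abszM leq_pmull ?absz_gt0.
have sX : size (redp p X) = size X by rewrite size_map_poly_id0.
have sY : size (redp p Y) = size Y by rewrite size_map_poly_id0.
have pX0 : redp p X != 0 by rewrite -size_poly_eq0 sX size_poly_eq0.
have pY0 : redp p Y != 0 by rewrite -size_poly_eq0 sY size_poly_eq0.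
have sXY : size X = size Y.
  have /(congr1 (fun P : {poly 'F_p} => (size P).-1)) := XY pp.
  rewrite !size_exp -sX -sY => /eqP; rewrite eqn_pmul2r // => /eqP h.
  by rewrite (polySpred pX0) h -polySpred.
apply/(coef_dvd_redp pp)/eqP.
rewrite rmorphB /= /redp !map_polyZ /= subr_eq0; apply/eqP.
apply: (@poly_expf_inj _ _ _ p.-1) => //.
- by rewrite scaler_eq0 negb_or pb pX0.
- by rewrite !size_scale // sX sY.
- by rewrite !lead_coefZ !lead_coef_map_id0 // mulrC.
- by rewrite -subn1 natrB ?prime_gt0 // pchar_Fp_0 // sub0r oppr_eq0 oner_eq0.
have := expf_card_pred pa; have := expf_card_pred pb; rewrite card_Fp //.
by rewrite !exprZn XY // => -> ->.
Qed.

Lemma common_primitive_part : exists (c1 c2 : int) (k : {poly int}),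
  [/\ X = c1%:P * k, Y = c2%:P * k,
      forall p : nat, prime p -> (p%:Z %| c1)%Z = (p%:Z %| c2)%Z & primitive_poly k].
Proof.
have [X0|X0] := eqVneq X 0.
  have Y0 : Y = 0.
    apply: (@coef_dvd_large_primes _ 0) => p pp _.
    by apply/(coef_dvd_pow_equiv pp); rewrite X0; apply: coef_dvd0.
  exists 0, 0, 1; rewrite X0 Y0 mul0r; split => //; split=> [|d /(_ 0%N)].
    exact: oner_neq0.
  by rewrite coef1 /= dvdz1 -abszE => /eqP ->.
have Y0 : Y != 0.
  apply: contra_neq X0 => Y0; apply: (@coef_dvd_large_primes _ 0) => p pp _.
  by apply/(coef_dvd_pow_equiv pp); rewrite Y0; apply: coef_dvd0.
have kY : zprimitive Y = zprimitive X.
  have aX : lead_coef X != 0 by rewrite lead_coef_eq0.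
  have aY : lead_coef Y != 0 by rewrite lead_coef_eq0.
  by rewrite -(zprimitiveZ Y aX) -scale_lead_coef_eq // zprimitiveZ.
exists (zcontents X), (zcontents Y), (zprimitive X); split.
- by rewrite mul_polyC -zpolyEprim.
- by rewrite mul_polyC -kY -zpolyEprim.
- move=> p pp.
  by apply/idP/idP => /coef_dvd_contents/(coef_dvd_pow_equiv pp)/coef_dvd_contents.
- exact: primitive_zprimitive.
Qed.

End ReductionPowers.

Lemma redp_qint_prime p g h : prime p ->
  coef_dvd p%:Z (qint p g - qint p h) -> redp p (1 - g) ^+ p.-1 = redp p (1 - h) ^+ p.-1.
Proof.
move=> pp /(coef_dvd_redp pp)/eqP; rewrite rmorphB /= subr_eq0 !rmorph_qint => /eqP gh.
by rewrite !rmorphB !rmorph1 /= -!qint_pchar ?gh // pchar_poly pchar_Fp.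
Qed.

Definition Zq_psiQRing : psiQRing.
Proof.
refine (@PsiQRing {poly int} 'X adams _ _ _ _ _ _) => [n _|n _|n _||n m _ _|n _].
- exact: rmorphD.
- exact: rmorphM.
- exact: rmorph1.
- exact: adams_id.
- exact: adams_comp.
- exact: comp_polyX.
Defined.

Lemma evalq_Zq f : evalq Zq_psiQRing f = f.
Proof.
rewrite /evalq -[RHS]coefK poly_def; apply: eq_bigr => i _ /=.
by rewrite -mul_polyC -[f`_i in RHS]intz rmorph_int.
Qed.

Lemma divisors_prime p : prime p -> divisors p = [:: 1%N; p].
Proof.
move=> pp; apply: (irr_sorted_eq ltn_trans ltnn (sorted_divisors_ltn p)).
  by rewrite /= andbT prime_gt1.
move=> d; rewrite -dvdn_divisors ?prime_gt0 // !inE.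
by case/primeP: pp => _ Hp; apply/idP/idP => [/Hp //|/orP[]/eqP ->]; rewrite ?dvd1n ?dvdnn.
Qed.

Lemma coef_dvd_qint_sub_prime g h (omega : Gseq Zq_psiQRing -> Gseq Zq_psiQRing) :
  (forall a, phibar g a = phibar h (omega a)) ->
  forall p, prime p -> coef_dvd p%:Z (qint p g - qint p h).
Proof.
move=> hom p pp; have p0 := prime_gt0 pp.
have p1 : (0 < p.-1)%N by rewrite -ltnS prednK ?(prime_gt1 pp).
pose a : Gseq Zq_psiQRing := fun i => if i == 0%N then 1 else 0.
have /(congr1 (fun F => F 0%N)) := hom a.
have /(congr1 (fun F => F p.-1)) := hom a.
rewrite /phibar /= prednK // divisors_prime // (_ : divisors 1 = [:: 1%N]) //.
rewrite !big_cons !big_nil !addr0 !divn1 divnn p0 !evalq_Zq !qint1 /= /a /= (gtn_eqF p1).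
rewrite (rmorph1 (adams p)) (rmorph0 (adams 1)) !adams_id !mul1r !mulr1 mulr0 addr0.
move=> -> <-; rewrite (rmorph1 (adams p)) mulr1 addrC addKr.
exact/coef_dvdMr/coef_dvd_natr.
Qed.

Theorem proposition5p10 (g h : {poly int}) :
  (exists omega : forall R : psiQRing, Gseq R -> Gseq R,
     (* each component is an isomorphism of abelian groups *)
     (forall R : psiQRing, forall a b : Gseq R,
        omega R (fun i => a i + b i) = (fun i => omega R a i + omega R b i)) /\
     (forall R : psiQRing, bijective (omega R)) /\
     (* naturality *)
     (forall (R S : psiQRing) (f : R -> S), is_psiQ_morph f ->
        forall a : Gseq R, omega S (fun i => f (a i)) = (fun i => f (omega R a i))) /\
     (* factorization *)
     (forall (R : psiQRing) (a : Gseq R), phibar g a = phibar h (omega R a)))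
  <->
  (exists (c1 c2 : int) (k : {poly int}),
     1 - g = c1%:P * k /\ 1 - h = c2%:P * k /\
     (forall p : nat, prime p -> (p%:Z %| c1)%Z = (p%:Z %| c2)%Z) /\
     primitive_poly k).
Proof.
split.
  case=> omega [_ [_ [_ hom]]].
  have /common_primitive_part [c1 [c2 [k [hg hh hc hk]]]] : forall p, prime p ->
      redp p (1 - g) ^+ p.-1 = redp p (1 - h) ^+ p.-1.
    by move=> p pp; apply/redp_qint_prime/(coef_dvd_qint_sub_prime (hom Zq_psiQRing)).
  by exists c1, c2, k.
case=> c1 [c2 [k [hg [hh [hc hk]]]]].
have gamma_dvd := coef_dvd_gamma hg hh hc hk.
exists (@omega g h); split; first exact: omegaD.
split; first exact: omega_bij.
split; first exact: omega_natural.
by move=> R a; rewrite omega_phibar.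
Qed.
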